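(* Let $\gamma_0>-1$ and $\Theta=(-1,+\infty)\times\mathbb{R}\times(0,+\infty)$. For $B\subset\Theta$ define $\ell_B(x)=\sup_{\theta\in B}\ell_\theta(x)$, $x\in\mathbb{R}$. Let $\theta\in\Theta$ and let $B(\theta,\varepsilon)$ denote the open ball in $\Theta$ with center $\theta$ and radius $\varepsilon>0$. Then \[ \lim_{\varepsilon\to0}G_{\gamma_0}[\ell_{B(\theta,\varepsilon)}]=G_{\gamma_0}[\ell_\theta], \] where $G_{\gamma_0}[f]=\int f\,dG_{\gamma_0}$.
   Context: For $\gamma\in\mathbb{R}$, $G_\gamma$ denotes the generalized extreme value distribution with distribution function $F_\gamma(x)=\exp(-(1+\gamma x)^{-1/\gamma})$ for $1+\gamma x>0$ (interpreted as $\exp(-e^{-x})$ when $\gamma=0$). The GEV log-likelihood is $\ell_\gamma(x)=-(1+1/\gamma)\log(1+\gamma x)-(1+\gamma x)^{-1/\gamma}$ if $1+\gamma x>0$ and $-\infty$ otherwise, with $\ell_0(x)=-x-e^{-x}$; for $\theta=(\gamma,\mu,\sigma)$ with $\sigma>0$, $\ell_\theta(x)=\ell_\gamma\big(\frac{x-\mu}{\sigma}\big)-\log\sigma$. *)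

From HB Require Import structures.
From mathcomp Require Import all_boot all_order all_algebra.
From mathcomp Require Import all_classical all_reals all_analysis.
Set Implicit Arguments. Unset Strict Implicit. Unset Printing Implicit Defensive.
Import Order.TTheory GRing.Theory Num.Theory.
Local Open Scope ring_scope.
Local Open Scope classical_set_scope.

Section GEV.
Variable R : realType.

Definition gev_cdf (g x : R) : R :=
  if g == 0 then expR (- expR (- x))
  else if 0 < 1 + g * x then expR (- ((1 + g * x) `^ (- g^-1)))
  else if 0 < g then 0 else 1.

Definition gev_ll (g x : R) : \bar R :=
  if g == 0 then (- x - expR (- x))%:E
  else if 0 < 1 + g * x then
    (- (1 + g^-1) * ln (1 + g * x) - (1 + g * x) `^ (- g^-1))%:E
  else -oo%E.

(* theta = (gamma, mu, sigma) *)
Definition gev_llt (t : R * R * R) (x : R) : \bar R :=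
  (gev_ll t.1.1 ((x - t.1.2) / t.2) - (ln t.2)%:E)%E.

Definition Theta : set (R * R * R) :=
  [set t | -1 < t.1.1 /\ 0 < t.2].

Definition Theta_ball (t : R * R * R) (e : R) : set (R * R * R) :=
  [set s | Theta s /\
    (s.1.1 - t.1.1) ^+ 2 + (s.1.2 - t.1.2) ^+ 2 + (s.2 - t.2) ^+ 2 < e ^+ 2].

Definition gev_llB (B : set (R * R * R)) (x : R) : \bar R :=
  ereal_sup [set gev_llt t x | t in B].

End GEV.

From HB Require Import structures.
From mathcomp Require Import all_boot all_order all_algebra.
From mathcomp Require Import all_classical all_reals all_analysis.
From mathcomp Require Import measurable_realfun ring lra.
Set Implicit Arguments. Unset Strict Implicit. Unset Printing Implicit Defensive.
Import Order.TTheory GRing.Theory Num.Theory.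
Import numFieldNormedType.Exports.
Local Open Scope ring_scope.
Local Open Scope classical_set_scope.

(* Only the finiteness of G_{gamma_0} matters.  On a small ball around theta the
   log-likelihoods ell_s(x) are bounded above by a single constant C, and
   s |-> ell_s(x) is upper semicontinuous at theta, also where x leaves the
   support (there ell tends to -oo).  Hence ell_{B(theta,eps)} decreases pointwise
   to ell_theta as eps decreases to 0, and monotone convergence applied to
   C - ell_{B(theta,eps)} gives the limit of the integrals.  Both facts come from
   writing ell_gamma(y) = (1 + gamma) v - e^v with v = -log(1 + gamma y) / gamma,
   which is jointly continuous in (gamma, y) including at gamma = 0, together with
   (1 + gamma) v - e^v <= (D + c)^2 - c |v| whenever 0 <= c <= 1 + gamma <= D. *)

Section integral_bounded_above.
Context d (T : measurableType d) (R : realType).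
Variable mu : {finite_measure set T -> \bar R}.
Local Open Scope ereal_scope.

Lemma integral_cstB (f : T -> \bar R) (C : R) : (0 <= C)%R ->
  measurable_fun setT f -> (forall x, f x <= C%:E) ->
  \int[mu]_x f x = C%:E * mu setT - \int[mu]_x (C%:E - f x).
Proof.
move=> C0 mf fC.
have fpC x : f^\+ x <= C%:E by rewrite funeposE ge_max fC lee_fin.
have CfE : (fun x => C%:E - f x) = (fun x => (C%:E - f^\+ x) + f^\- x).
  apply/funext => x; rewrite funeposE funenegE.
  move: (fC x); case: (f x) => [r _| |_] /=.
  - have [r0|r0] := leP 0%R r.
      by rewrite max_l ?lee_fin // max_r ?lee_fin ?oppr_le0 // adde0.
    by rewrite max_r ?lee_fin ?ltW // max_l ?lee_fin ?oppr_ge0 ?ltW // sube0.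
  - by rewrite leye_eq.
  - by rewrite max_r ?leNye // max_l ?leey // sube0.
have iC : mu.-integrable setT (fun _ => C%:E).
  exact: (finite_measure_integrable_cst _ C measurableT).
have ifp : mu.-integrable setT f^\+.
  apply: (le_integrable measurableT (measurable_funepos mf) _ iC) => x _.
  by rewrite !gee0_abs ?lee_fin.
rewrite CfE ge0_integralD //; last 3 first.
- by move=> x _; rewrite sube_ge0 ?orbT.
- by apply: emeasurable_funB => //; exact: measurable_funepos.
- exact: measurable_funeneg.
rewrite (integralB measurableT iC ifp) integral_cst //= [in LHS]integralE.
have : \int[mu]_x f^\+ x \is a fin_num by exact: integrable_fin_num.
have : 0 <= \int[mu]_x f^\- x by exact: integral_ge0.
have : mu setT \is a fin_num by exact: fin_num_measure.
case: (mu setT) => [m| |] //; case: (\int[mu]_x f^\- x) => [b| |] //;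
  case: (\int[mu]_x f^\+ x) => [a| |] //= _ _ _.
by rewrite -EFinM -!EFinD; congr EFin; ring.
Qed.

Lemma le_integral_bounded (f g : T -> \bar R) (C : R) : (0 <= C)%R ->
  measurable_fun setT f -> measurable_fun setT g ->
  (forall x, f x <= g x) -> (forall x, g x <= C%:E) ->
  \int[mu]_x f x <= \int[mu]_x g x.
Proof.
move=> C0 mf mg fg gC; have fC x := le_trans (fg x) (gC x).
rewrite (integral_cstB C0 mf fC) (integral_cstB C0 mg gC).
apply: leeB => //; apply: ge0_le_integral => //.
- by move=> x _; rewrite sube_ge0 ?orbT.
- by apply: emeasurable_funB => //; exact: measurable_cst.
- by apply: emeasurable_funB => //; exact: measurable_cst.
- by move=> x _; exact: leeB.
Qed.

Lemma cvg_integral_nonincreasing (f_ : (T -> \bar R)^nat) (f : T -> \bar R)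
    (C : R) : (0 <= C)%R ->
  (forall n, measurable_fun setT (f_ n)) -> measurable_fun setT f ->
  (forall n x, f_ n x <= C%:E) ->
  (forall x, {homo f_^~ x : n m / (n <= m)%N >-> m <= n}) ->
  (forall x, f_^~ x @ \oo --> f x) ->
  \int[mu]_x f_ n x @[n --> \oo] --> \int[mu]_x f x.
Proof.
move=> C0 mf_ mf f_C nif_ f_f.
have fC x : f x <= C%:E.
  by rewrite -(cvg_lim _ (f_f x)) //; apply: lime_le; [apply/cvg_ex; exists (f x)|exact: nearW].
pose g_ n x := C%:E - f_ n x.
have mg_ n : measurable_fun setT (g_ n).
  by apply: emeasurable_funB => //; exact: measurable_cst.
have g_0 n x : setT x -> 0 <= g_ n x by rewrite sube_ge0 ?orbT.
have ndg_ x : setT x -> {homo g_^~ x : n m / (n <= m)%N >-> n <= m}.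
  by move=> _ n m nm; apply: leeB => //; exact: nif_.
have := cvg_monotone_convergence measurableT mg_ g_0 ndg_.
have -> : (fun x => limn (g_^~ x)) = fun x => C%:E - f x.
  apply/funext => x; apply: cvg_lim => //.
  by apply: cvgeB; [exact: fin_num_adde_defr|exact: cvg_cst|exact: f_f].
move=> cvg_g; rewrite (integral_cstB C0 mf fC).
have -> : (fun n => \int[mu]_x f_ n x) =
          fun n => C%:E * mu setT - \int[mu]_x g_ n x.
  by apply/funext => n; exact: integral_cstB.
have fin : C%:E * mu setT \is a fin_num by rewrite fin_numM ?fin_num_measure.
by apply: cvgeB; [exact: fin_num_adde_defr|exact: cvg_cst|exact: cvg_g].
Qed.

End integral_bounded_above.

Section gev_shape.
Variable R : realType.
Implicit Types g y v : R.

Lemma mulr_subexpR_le_sqr (a v : R) : 0 <= a -> a * v - expR v <= a ^+ 2.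
Proof.
move=> a0; have [v0|v0] := leP v 0.
  by have := expR_gt0 v; have := sqr_ge0 a; nra.
have ev : (1 + v / 2) ^+ 2 <= expR v.
  rewrite [in leRHS](splitr v) expRD expr2.
  by apply: ler_pM; rewrite ?expR_ge1Dx //; lra.
by have := sqr_ge0 (a - v / 2); rewrite !expr2 in ev *; nra.
Qed.

Lemma le_mulr_subexpR (g c D v : R) : 0 <= c -> c <= 1 + g -> 1 + g <= D ->
  (1 + g) * v - expR v <= (D + c) ^+ 2 - c * `|v|.
Proof.
move=> c0 cg gD; have [v0|v0] := leP 0 v.
  rewrite ger0_norm //; have := @mulr_subexpR_le_sqr (D + c) v.
  by move=> /(_ ltac:(lra)); nra.
rewrite ltr0_norm //; have := expR_gt0 v; have := sqr_ge0 (D + c); nra.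
Qed.

Lemma ln1D_bounds (u : R) : 1 / 2 <= 1 + u -> 0 <= u - ln (1 + u) <= 2 * u ^+ 2.
Proof.
move=> hu; have u1 : -1 < u by lra.
have w1 : -1 < - u / (1 + u) by rewrite ltr_pdivlMr; lra.
have := le_ln1Dx w1.
have -> : 1 + - u / (1 + u) = (1 + u)^-1 by field; lra.
rewrite lnV ?posrE; last lra.
have -> : - u / (1 + u) = u ^+ 2 / (1 + u) - u by field; lra.
move=> h; apply/andP; split; first by have := le_ln1Dx u1; lra.
suff : u ^+ 2 / (1 + u) <= 2 * u ^+ 2 by lra.
by rewrite ler_pdivrMr; [have := sqr_ge0 u; nra|lra].
Qed.

(* [gev_V g y] is the v with [exp (- v) = (1 + g y) ^ (1 / g)] (and its limit
   [- y] at [g = 0]), so that [gev_ll g y = (1 + g) v - exp v] on the support. *)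
Definition gev_V g y : R := if g == 0 then - y else - ln (1 + g * y) / g.

Definition gev_core g v : R := (1 + g) * v - expR v.

Lemma gev_llE g y : 0 < 1 + g * y -> gev_ll g y = (gev_core g (gev_V g y))%:E.
Proof.
move=> z0; rewrite /gev_ll /gev_core /gev_V; case: eqP => [->|/eqP g0].
  by rewrite addr0 mul1r.
rewrite z0 /powR gt_eqF //; congr EFin; congr (_ - _).
  by field.
by rewrite mulNr mulrC mulNr.
Qed.

Lemma gev_ll_Ny g y : 1 + g * y <= 0 -> gev_ll g y = -oo%E.
Proof.
move=> z0; have g0 : g != 0 by apply: contraTneq z0 => ->; rewrite mul0r addr0 -ltNge.
by rewrite /gev_ll (negbTE g0) ltNge z0.
Qed.

Lemma gev_V_addr_le g y : 1 / 2 <= 1 + g * y -> `|gev_V g y + y| <= 2 * `|g| * y ^+ 2.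
Proof.
move=> hz; rewrite /gev_V; case: eqP => [->|/eqP g0].
  by rewrite addNr normr0 mulr0 mul0r.
have /andP[D0 D1] := ln1D_bounds hz.
have -> : - ln (1 + g * y) / g + y = (g * y - ln (1 + g * y)) / g by field.
rewrite normrM normrV ?unitfE // (ger0_norm D0) ler_pdivrMr ?normr_gt0 //.
suff -> : 2 * `|g| * y ^+ 2 * `|g| = 2 * (g * y) ^+ 2 by [].
by rewrite exprMn -(real_normK (num_real g)); ring.
Qed.

Lemma cvg_1Dmul g y : (1 + q.1 * q.2) @[q --> (g, y)] --> 1 + g * y.
Proof. by apply: cvgD; [exact: cvg_cst|apply: cvgM; [exact: cvg_fst|exact: cvg_snd]]. Qed.

Lemma gev_V_cvg g y : 0 < 1 + g * y -> gev_V q.1 q.2 @[q --> (g, y)] --> gev_V g y.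
Proof.
move=> z0; rewrite {2}/gev_V; case: eqP => [->|/eqP g0]; last first.
  have gq : \forall q \near (g, y), q.1 != 0.
    have : 0 < `|g| by rewrite normr_gt0.
    move/(cvgr_gt _ (cvg_norm (@cvg_fst _ _ (nbhs g) (nbhs y) _))).
    by apply: filterS => q; rewrite normr_gt0.
  apply: cvg_trans; first (apply: near_eq_cvg; near=> q;
    have q0 : q.1 != 0 by near: q).
    by rewrite /gev_V (negbTE q0).
  apply: cvgM; last by apply: cvgV => //; exact: cvg_fst.
  by apply: cvgN; apply: cvg_comp (@cvg_1Dmul g y) (continuous_ln z0).
(* near [g = 0], [gev_V] is squeezed between [- y -+ 2 |g| y ^ 2] *)
have zq : \forall q \near ((0:R), y), 1 / 2 < 1 + q.1 * q.2.
  by apply: (cvgr_gt _ (@cvg_1Dmul 0 y)); rewrite mul0r addr0; lra.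
have err0 : (2 * `|q.1| * q.2 ^+ 2) @[q --> ((0:R), y)] --> (0:R).
  suff : (2 * `|q.1| * q.2 ^+ 2) @[q --> ((0:R), y)] --> 2 * `|0 : R| * y ^+ 2.
    by rewrite normr0 mulr0 mul0r.
  apply: cvgM; last by rewrite expr2; apply: cvgM; exact: cvg_snd.
  by apply: cvgM; [exact: cvg_cst|apply: cvg_norm; exact: cvg_fst].
apply: (@squeeze_cvgr _ _ _ _ (fun q => - q.2 - 2 * `|q.1| * q.2 ^+ 2)
   (fun q => - q.2 + 2 * `|q.1| * q.2 ^+ 2)).
- near=> q; have /ltW/gev_V_addr_le : 1 / 2 < 1 + q.1 * q.2 by near: q.
  by rewrite ler_norml; lra.
- by rewrite -[X in _ --> X]subr0; apply: cvgB; [exact: (cvgN cvg_snd)|exact: err0].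
- by rewrite -[X in _ --> X]addr0; apply: cvgD; [exact: (cvgN cvg_snd)|exact: err0].
Unshelve. all: by end_near.
Qed.

Lemma gev_core_V_cvg g y : 0 < 1 + g * y ->
  gev_core q.1 (gev_V q.1 q.2) @[q --> (g, y)] --> gev_core g (gev_V g y).
Proof.
move=> z0; apply: cvgB.
  apply: cvgM; last exact: gev_V_cvg.
  by apply: cvgD; [exact: cvg_cst|exact: cvg_fst].
by apply: continuous_cvg; [exact: continuous_expR|exact: gev_V_cvg].
Qed.

Lemma gev_ll_lsc : lower_semicontinuous (fun q : R * R => gev_ll q.1 q.2).
Proof.
move=> [g y] a /=; have [z0 ha|z0] := ltP 0 (1 + g * y); last by rewrite gev_ll_Ny.
rewrite gev_llE // lte_fin in ha.
have z_gt := cvgr_gt _ (@cvg_1Dmul g y) _ z0.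
have core_gt := cvgr_gt _ (gev_core_V_cvg z0) _ ha.
exists [set q | 0 < 1 + q.1 * q.2 /\ a < gev_core q.1 (gev_V q.1 q.2)].
  exact: filterS2 (z_gt _) (core_gt _).
by move=> q [zq hq]; rewrite gev_llE // lte_fin.
Qed.

Lemma gev_core_V_le_ln g y c D G : 0 <= c -> c <= 1 + g -> 1 + g <= D ->
  `|g| <= G -> 0 < 1 + g * y < 1 ->
  gev_core g (gev_V g y) <= (D + c) ^+ 2 + c * ln (1 + g * y) / G.
Proof.
move=> c0 cg gD gG /andP[z0 z1].
have g0 : g != 0 by apply: contraTneq z1 => ->; rewrite mul0r addr0 ltxx.
have G0 : 0 < G by apply: lt_le_trans gG; rewrite normr_gt0.
have lnz : ln (1 + g * y) < 0 by rewrite ln_lt0 // z0.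
have VG : - ln (1 + g * y) <= `|gev_V g y| * G.
  have -> : - ln (1 + g * y) = `|gev_V g y * g|.
    by rewrite /gev_V (negbTE g0) mulfVK // gtr0_norm // oppr_gt0.
  by rewrite normrM ler_wpM2l.
have := le_mulr_subexpR (gev_V g y) c0 cg gD; rewrite /gev_core.
suff : - c * `|gev_V g y| <= c * ln (1 + g * y) / G by lra.
rewrite mulNr lerNl.
have -> : - (c * ln (1 + g * y) / G) = c * (- ln (1 + g * y) / G) by ring.
by rewrite ler_wpM2l // ler_pdivrMr.
Qed.

Lemma gev_ll_usc g y M : -1 < g -> (gev_ll g y < M%:E)%E ->
  \forall q \near (g, y), (gev_ll q.1 q.2 < M%:E)%E.
Proof.
move=> g1 hM; have [z0|z0] := ltP 0 (1 + g * y).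
  rewrite gev_llE // lte_fin in hM.
  have z_gt := cvgr_gt _ (@cvg_1Dmul g y) _ z0.
  have core_lt := cvgr_lt _ (gev_core_V_cvg z0) _ hM.
  by apply: filterS2 (z_gt _) (core_lt _) => q zq hq; rewrite gev_llE // lte_fin.
(* off the open support, [gev_core_V_le_ln] drives the log-likelihood to [-oo] *)
set c := (1 + g) / 2; set D := 2 + g; set G := `|g| + 1.
set K := `|(M - (D + c) ^+ 2) * G / c| + 1.
have c0 : 0 < c by rewrite /c; lra.
have G0 : 0 < G by rewrite /G; have := normr_ge0 g; lra.
have zK : 1 + g * y < expR (- K) by apply: (le_lt_trans z0); exact: expR_gt0.
have g_lo : (g - 1) / 2 < g by lra.
have g_hi : g < g + 1 by lra.
near=> q.
have q_lo : (g - 1) / 2 < q.1 by near: q; exact: cvgr_gt _ (@cvg_fst _ _ (nbhs g) (nbhs y) _) _ g_lo.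
have q_hi : q.1 < g + 1 by near: q; exact: cvgr_lt _ (@cvg_fst _ _ (nbhs g) (nbhs y) _) _ g_hi.
have zqK : 1 + q.1 * q.2 < expR (- K).
  by near: q; exact: cvgr_lt _ (@cvg_1Dmul g y) _ zK.
have [zq|zq] := leP (1 + q.1 * q.2) 0; first by rewrite gev_ll_Ny ?ltNyr.
have K0 : 0 < K by rewrite /K; have := normr_ge0 ((M - (D + c) ^+ 2) * G / c); lra.
have zq1 : 1 + q.1 * q.2 < 1.
  by apply: lt_le_trans zqK _; rewrite expR_le1 oppr_le0 ltW.
have lnK : ln (1 + q.1 * q.2) < - K.
  by rewrite -[- K]expRK ltr_ln ?posrE ?expR_gt0.
have qG : `|q.1| <= G.
  by rewrite /G ler_norml; have := ler_norm g; have := ler_norm (- g); rewrite normrN; lra.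
have := @gev_core_V_le_ln q.1 q.2 c D G (ltW c0) _ _ qG.
rewrite gev_llE // lte_fin zq zq1 => /(_ ltac:(rewrite /c; lra) ltac:(rewrite /D; lra) isT).
suff : c * ln (1 + q.1 * q.2) / G < M - (D + c) ^+ 2 by lra.
rewrite ltr_pdivrMr // -ltr_pdivlMl // -[_ * (_ * G)]mulrC.
apply: (lt_trans lnK); rewrite /K.
by have := ler_norm (- ((M - (D + c) ^+ 2) * G / c)); rewrite normrN; lra.
Unshelve. all: by end_near.
Qed.

End gev_shape.

Section ereal_fin.
Variable R : realType.
Local Open Scope ereal_scope.

Lemma lte_fin_dense (a : \bar R) (b : R) : a < b%:E -> exists2 m : R, a < m%:E & (m < b)%R.
Proof.
case: a => [a| |] //=; last by move=> _; exists (b - 1)%R; rewrite ?ltNyr //; lra.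
by rewrite lte_fin => ab; exists ((a + b) / 2)%R; rewrite ?lte_fin; lra.
Qed.

Lemma lee_fin_gt (a b : \bar R) : (forall r : R, b < r%:E -> a <= r%:E) -> a <= b.
Proof.
case: b => [b| |] h; [|by rewrite leey|].
- case: a h => [a| |] h; last by rewrite leNye.
  + rewrite lee_fin; apply/ler_addgt0Pr => e e0.
    by have := h (b + e)%R; rewrite !lte_fin lee_fin; apply; lra.
  + by have := h (b + 1)%R; rewrite lte_fin leNgt ltry; apply; lra.
- by rewrite (eq_ninfty (fun r => h r (ltNyr r))).
Qed.

End ereal_fin.

Section gev_params.
Variable R : realType.
Implicit Types (s t : R * R * R) (x : R).

Lemma cvg_gev_coord t x : (0 < t.2)%R ->
  (s.1.1, (x - s.1.2) / s.2) @[s --> t] --> (t.1.1, (x - t.1.2) / t.2).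
Proof.
move=> t0; apply: (@cvg_pair _ _ _ _ (nbhs t.1.1) (nbhs ((x - t.1.2) / t.2))).
  by apply: cvg_comp; exact: cvg_fst.
apply: cvgM; last by apply: cvgV; [rewrite gt_eqF|exact: cvg_snd].
apply: cvgB; first exact: cvg_cst.
by apply: cvg_comp; [exact: cvg_fst|exact: cvg_snd].
Qed.

Lemma gev_llt_usc t x M : Theta t -> (gev_llt t x < M%:E)%E ->
  \forall s \near t, (gev_llt s x < M%:E)%E.
Proof.
move=> [g1 t0]; rewrite /gev_llt lteBlDr // -EFinD => /lte_fin_dense[m llm mM].
have ll_lt := @cvg_gev_coord t x t0 _ (gev_ll_usc g1 llm).
have ln_gt : \forall s \near t, m - M < ln s.2.
  have ln_cvg : ln s.2 @[s --> t] --> ln t.2.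
    by apply: continuous_cvg; [exact: continuous_ln|exact: cvg_snd].
  by apply: (cvgr_gt _ ln_cvg); lra.
near=> s.
have lls : (gev_ll s.1.1 ((x - s.1.2) / s.2) < m%:E)%E by near: s; exact: ll_lt.
have lns : m - M < ln s.2 by near: s; exact: ln_gt.
by rewrite lteBlDr // -EFinD (lt_le_trans lls) // lee_fin; lra.
Unshelve. all: by end_near.
Qed.

Lemma gev_llt_lsc s : 0 < s.2 -> lower_semicontinuous (gev_llt s).
Proof.
move=> s0 x a; rewrite /gev_llt lteBrDr // -EFinD => llx.
have [V VE llV] := @gev_ll_lsc R (s.1.1, (x - s.1.2) / s.2) _ llx.
have coord : (s.1.1, (x' - s.1.2) / s.2) @[x' --> x] --> (s.1.1, (x - s.1.2) / s.2).
  apply: (@cvg_pair _ _ _ _ (nbhs s.1.1) (nbhs ((x - s.1.2) / s.2))).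
    exact: cvg_cst.
  by apply: cvgM; [apply: cvgB; [exact: cvg_id|exact: cvg_cst]|exact: cvg_cst].
exists [set x' | V (s.1.1, (x' - s.1.2) / s.2)]; first exact: coord.
by move=> x' /llV; rewrite lteBrDr // -EFinD.
Qed.

Lemma gev_llB_lsc (B : set (R * R * R)) : B `<=` @Theta R -> lower_semicontinuous (gev_llB B).
Proof.
move=> BT x a /ereal_sup_gt[_ [s Bs <-]] ha.
have [V xV llV] := gev_llt_lsc (BT s Bs).2 ha.
exists V => // y /llV /lt_le_trans; apply.
by apply: ereal_sup_ubound; exists s.
Qed.

Lemma gev_llt_le s x G sg : Theta s -> s.1.1 <= G -> 0 < sg <= s.2 ->
  (gev_llt s x <= ((1 + G) ^+ 2 - ln sg)%:E)%E.
Proof.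
move=> [g1 s0] gG /andP[sg0 sgs]; have := ler_ln sg0 s0; rewrite sgs => lns.
have [z0|z0] := ltP 0 (1 + s.1.1 * ((x - s.1.2) / s.2)); last first.
  by rewrite /gev_llt gev_ll_Ny // addNye leNye.
rewrite /gev_llt gev_llE // -EFinB lee_fin /gev_core.
have := @le_mulr_subexpR _ s.1.1 0 (1 + G) (gev_V s.1.1 ((x - s.1.2) / s.2)).
by rewrite mul0r subr0 addr0 => /(_ (lexx 0) ltac:(lra) ltac:(lra)); lra.
Qed.

End gev_params.

Section gev_ball.
Variable R : realType.
Implicit Types (s t : R * R * R) (e x : R).

Lemma Theta_ball_center t e : Theta t -> 0 < e -> Theta_ball t e t.
Proof. by move=> Tt e0; split=> //; rewrite !subrr expr0n /= !addr0 exprn_gt0. Qed.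

Lemma Theta_ballS t e e' : 0 <= e <= e' -> Theta_ball t e `<=` Theta_ball t e'.
Proof.
move=> /andP[e0 ee'] s [Ts hs]; split => //; apply: (lt_le_trans hs).
by rewrite ler_sqr ?nnegrE //; exact: le_trans ee'.
Qed.

Lemma Theta_ball_dist t e s : 0 < e -> Theta_ball t e s ->
  [/\ `|s.1.1 - t.1.1| < e, `|s.1.2 - t.1.2| < e & `|s.2 - t.2| < e].
Proof.
move=> e0 [_ hs]; have := sqr_ge0 (s.1.1 - t.1.1).
have := sqr_ge0 (s.1.2 - t.1.2); have := sqr_ge0 (s.2 - t.2).
by split; rewrite -ltr_sqr ?nnegrE ?normr_ge0 ?(ltW e0) // real_normK ?num_real; lra.
Qed.

Lemma nbhs_Theta_ball t (Q : set (R * R * R)) : (\forall s \near t, Q s) ->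
  exists2 d, 0 < d & Theta_ball t d `<=` Q.
Proof.
move=> /nbhs_ballP[d d0 dQ]; exists d => // s /(Theta_ball_dist d0)[h1 h2 h3].
apply: dQ; rewrite /ball /= /prod_ball /ball /= /prod_ball /ball /=.
by rewrite !(distrC t.1.1) !(distrC t.1.2) !(distrC t.2).
Qed.

Local Open Scope ereal_scope.

Lemma gev_llt_le_llB t e x : Theta t -> (0 < e)%R ->
  gev_llt t x <= gev_llB (Theta_ball t e) x.
Proof. by move=> Tt e0; apply: ereal_sup_ubound; exists t => //; exact: Theta_ball_center. Qed.

Lemma gev_llB_ballS t e e' x : (0 <= e <= e')%R ->
  gev_llB (Theta_ball t e) x <= gev_llB (Theta_ball t e') x.
Proof.
move=> ee'; apply: ereal_sup_le => _ [s hs <-]; exists s => //.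
exact: Theta_ballS hs.
Qed.

Lemma gev_llB_ball_bounded t : Theta t -> exists2 C : R, (0 <= C)%R &
  forall e x, (0 < e <= t.2 / 2)%R -> gev_llB (Theta_ball t e) x <= C%:E.
Proof.
move=> [g1 t0]; set G := (t.1.1 + t.2 / 2)%R.
exists ((1 + G) ^+ 2 + `|ln (t.2 / 2)|)%R.
  by rewrite addr_ge0 ?sqr_ge0.
move=> e x /andP[e0 et]; apply: ge_ereal_sup => _ [s hs <-].
have [s1 _ s2] := Theta_ball_dist e0 hs.
have -> : ((1 + G) ^+ 2 + `|ln (t.2 / 2)|)%R =
          ((1 + G) ^+ 2 - ln (t.2 / 2) + (`|ln (t.2 / 2)| + ln (t.2 / 2)))%R.
  by ring.
rewrite EFinD -[X in X <= _]adde0 leeD //; last first.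
  by rewrite lee_fin; have := ler_norm (- ln (t.2 / 2)); rewrite normrN; lra.
apply: gev_llt_le; first exact: hs.1.
- by move: s1; rewrite /G ltr_norml; lra.
- by move: s2; rewrite ltr_norml; lra.
Qed.

Lemma gev_llB_ball_cvgn t x (e_ : R^nat) : Theta t -> (forall n, 0 < e_ n)%R ->
  {homo e_ : n m / (n <= m)%N >-> (m <= n)%R} -> (e_ n @[n --> \oo] --> 0%R) ->
  gev_llB (Theta_ball t (e_ n)) x @[n --> \oo] --> gev_llt t x.
Proof.
move=> Tt e_0 nie_ e_cvg; set u := fun n => gev_llB (Theta_ball t (e_ n)) x.
have := @ereal_nonincreasing_cvgn _ u.
suff -> : ereal_inf (range u) = gev_llt t x.
  by apply=> n m nm; apply: gev_llB_ballS; rewrite (ltW (e_0 m)) nie_.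
apply/le_anti/andP; split; last first.
  by apply: le_ereal_inf_tmp => _ [n _ <-]; exact: gev_llt_le_llB.
apply: lee_fin_gt => r /(gev_llt_usc Tt)/nbhs_Theta_ball[d d0 dr].
have [N _ e_d] := cvgr_lt _ e_cvg _ d0.
apply: ge_ereal_inf; exists (u N); first by exists N.
apply: ge_ereal_sup => _ [s hs <-]; apply/ltW/dr.
by apply: Theta_ballS hs; rewrite (ltW (e_0 N)) ltW // e_d /=.
Qed.

Lemma measurable_gev_llB_ball t e : measurable_fun setT (gev_llB (Theta_ball t e)).
Proof. by apply: lower_semicontinuous_measurable; apply: gev_llB_lsc => s []. Qed.

Lemma measurable_gev_llt t : Theta t -> measurable_fun setT (gev_llt t).
Proof. by move=> [_ t0]; exact: lower_semicontinuous_measurable (gev_llt_lsc t0). Qed.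

Section integral.
Variable mu : {finite_measure set R -> \bar R}.

Lemma gev_llB_ball_integral_cvgn t (e_ : R^nat) : Theta t ->
  (forall n, 0 < e_ n <= t.2 / 2)%R -> {homo e_ : n m / (n <= m)%N >-> (m <= n)%R} ->
  (e_ n @[n --> \oo] --> 0%R) ->
  \int[mu]_x gev_llB (Theta_ball t (e_ n)) x @[n --> \oo] --> \int[mu]_x gev_llt t x.
Proof.
move=> Tt e_t nie_ e_cvg; have [C C0 llB_C] := gev_llB_ball_bounded Tt.
have e_0 n : (0 < e_ n)%R by have /andP[] := e_t n.
apply: (cvg_integral_nonincreasing C0 (fun n => measurable_gev_llB_ball t (e_ n))).
- exact: measurable_gev_llt.
- by move=> n x; exact: llB_C.
- by move=> x n m nm; apply: gev_llB_ballS; rewrite (ltW (e_0 m)) nie_.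
- by move=> x; exact: gev_llB_ball_cvgn.
Qed.

Lemma gev_llB_ball_integral_cvg t : Theta t ->
  (fun e => \int[mu]_x gev_llB (Theta_ball t e) x) @ 0%R^'+ --> \int[mu]_x gev_llt t x.
Proof.
move=> Tt; have [C C0 llB_C] := gev_llB_ball_bounded Tt.
set e0 := (t.2 / 2)%R; have e00 : (0 < e0)%R by rewrite divr_gt0 // Tt.2.
pose I e := \int[mu]_x gev_llB (Theta_ball t e) x.
have I_nd : {in Interval (BRight 0%R) (BRight e0) &, nondecreasing_fun I}.
  move=> a b ha hb ab; move: ha hb; rewrite !in_itv /= => /andP[a0 _] /andP[b0 be].
  apply: (le_integral_bounded mu C0) => [||x|x]; try exact: measurable_gev_llB_ball.
    by apply: gev_llB_ballS; rewrite ltW.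
  by apply: llB_C; rewrite b0.
have := @nondecreasing_at_right_cvge R I 0%R (BRight e0) _ I_nd.
suff -> : ereal_inf (I @` [set` Interval (BRight 0%R) (BRight e0)]) =
          \int[mu]_x gev_llt t x by apply; rewrite bnd_simp.
pose e_ n := (e0 / n.+1%:R)%R.
have e_t n : (0 < e_ n <= e0)%R.
  by rewrite divr_gt0 //= ler_pdivrMr // ler_peMr ?(ltW e00) // ler1n.
have nie_ : {homo e_ : n m / (n <= m)%N >-> (m <= n)%R}.
  by move=> n m nm; rewrite ler_pM2l // lef_pV2 ?posrE // ler_nat.
have e_cvg : e_ n @[n --> \oo] --> 0%R.
  by rewrite -(mulr0 e0); apply: cvgM; [exact: cvg_cst|exact: cvg_harmonic].
have cvgI := gev_llB_ball_integral_cvgn Tt e_t nie_ e_cvg.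
apply/le_anti/andP; split.
  rewrite -(cvg_lim _ cvgI) //; apply: lime_ge; first by apply/cvg_ex; eexists; exact: cvgI.
  by apply: nearW => n; apply: ereal_inf_lbound; exists (e_ n); rewrite //= in_itv /= e_t.
apply: le_ereal_inf_tmp => _ [e + <-]; rewrite /= in_itv /= => /andP[e0' ee0].
apply: (le_integral_bounded mu C0) => [||x|x].
- exact: measurable_gev_llt.
- exact: measurable_gev_llB_ball.
- exact: gev_llt_le_llB.
- by apply: llB_C; rewrite e0'.
Qed.

End integral.

End gev_ball.

Local Open Scope ereal_scope.

Theorem lemma3p2 (R : realType) (P : probability R R) (g0 : R)
  (hP : forall x : R, P `]-oo, x] = (gev_cdf g0 x)%:E)
  (hg0 : (-1 < g0)%R) (t : R * R * R) (ht : Theta t) :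
  (fun e : R => \int[P]_x gev_llB (Theta_ball t e) x) @ 0%R^'+ -->
    \int[P]_x gev_llt t x.
Proof. exact: gev_llB_ball_integral_cvg ht. Qed.
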